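(* Let $(k_n)$ be a sequence of positive integers such that $k_n^2\,(k_n)!=o(\sqrt n)$ as $n\to\infty$. Then $$\mathbb{E}\big[\mathcal{L}_{\le}(S_{k_n;n})\big]=\mathbb{E}\big[\mathcal{L}_{<}(S_{k_n;n})\big]+o(\sqrt{nk_n}),$$ and moreover $\mathcal{L}_{\le}(S_{k_n;n})-\mathcal{L}_{<}(S_{k_n;n})=o_{\mathbb P}(\sqrt{nk_n})$, i.e. for every $\delta>0$, $\mathbb P\big(\mathcal{L}_{\le}(S_{k_n;n})-\mathcal{L}_{<}(S_{k_n;n})\ge\delta\sqrt{nk_n}\big)\to0$.
   Context: A $k$-multiset permutation of size $n$ is a word $s=(s(1),\dots,s(kn))$ with letters in $\{1,\dots,n\}$ in which each letter appears exactly $k$ times, identified with the point set $\{(i,s(i)):1\le i\le kn\}$; $S_{k;n}$ is a uniformly random one. $(x,y)\prec(x',y')$ iff $x<x'$ and $y<y'$; $(x,y)\preccurlyeq(x',y')$ iff $x<x'$ and $y\le y'$. For a finite point set $\mathcal P$, $\mathcal L_<(\mathcal P)$ (resp. $\mathcal L_\le(\mathcal P)$) is the maximal length of a chain $P_1\prec\dots\prec P_L$ (resp. $P_1\preccurlyeq\dots\preccurlyeq P_L$) of points of $\mathcal P$. *)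

From HB Require Import structures.
From mathcomp Require Import all_boot all_order all_algebra.
From mathcomp Require Import reals.
Set Implicit Arguments. Unset Strict Implicit. Unset Printing Implicit Defensive.
Import Order.TTheory GRing.Theory Num.Theory.

(* Words of length k*n over the alphabet 'I_n (letter a : 'I_n stands for a+1).
   Position i : 'I_(k*n) stands for i+1. *)
Definition mword (k n : nat) := {ffun 'I_(k * n) -> 'I_n}.

Definition is_mperm (k n : nat) (s : mword k n) : bool :=
  [forall a : 'I_n, #|[set i | s i == a]| == k].

(* the sample space of S_{k;n} (uniform distribution on it) *)
Definition MPerm (k n : nat) : {set mword k n} := [set s | is_mperm s].

Definition strict_chain (k n : nat) (s : mword k n) (I : {set 'I_(k * n)}) : bool :=
  [forall i in I, forall j in I, (i < j)%N ==> (s i < s j)%N].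
Definition weak_chain (k n : nat) (s : mword k n) (I : {set 'I_(k * n)}) : bool :=
  [forall i in I, forall j in I, (i < j)%N ==> (s i <= s j)%N].

Definition Lstrict (k n : nat) (s : mword k n) : nat :=
  \max_(I : {set 'I_(k * n)} | strict_chain s I) #|I|.
Definition Lweak (k n : nat) (s : mword k n) : nat :=
  \max_(I : {set 'I_(k * n)} | weak_chain s I) #|I|.

Local Open Scope ring_scope.

Definition Exp (R : realType) (k n : nat) (f : mword k n -> nat) : R :=
  (\sum_(s in MPerm k n) (f s)%:R) / (#|MPerm k n|)%:R.

Definition Prob (R : realType) (k n : nat) (E : pred (mword k n)) : R :=
  (#|[set s in MPerm k n | E s]|)%:R / (#|MPerm k n|)%:R.

From HB Require Import structures.
From mathcomp Require Import all_boot all_order all_algebra all_fingroup.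
From mathcomp Require Import reals.
From mathcomp Require Import zify ring lra.
Import Order.TTheory GRing.Theory Num.Theory.
Set Implicit Arguments. Unset Strict Implicit. Unset Printing Implicit Defensive.

(* If [L_<= s >= L_< s + 2r], split a maximal weak chain into runs of equal
   letters: the last points of the runs form a strict chain, so the remaining
   points contain [r] disjoint pairs of equal letters.  Hence [s] carries a
   pattern of [2r] increasing positions with letters [b1 b1 b2 b2 ...],
   [b1 <= b2 <= ...].  A union bound over the ['C(kn, 2r)] position sets and
   the ['C(r + n, r)] letter sequences, each fixed assignment having
   probability at most [k ^ 2r / (kn) ^_ 2r], bounds the probability of such a
   pattern by [(32 n k^2 / r^3) ^ r].  For [r] of order [a sqrt(nk)] this is
   small as soon as [k^2 / n] is, which the hypothesis gives; the tail bound
   follows, and the mean bound from [E (L_<= - L_<) <= 2r + kn P(pattern)]. *)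

(** * Runs of equal letters in a weak chain *)

Lemma seq_size_ind (T : Type) (P : seq T -> Prop) :
  (forall c, (forall c', size c' < size c -> P c') -> P c) -> forall c, P c.
Proof.
move=> IH c; have [m] := ubnP (size c); elim: m c => [|m IHm] c // ltcm.
by apply: IH => c' ltc'c; apply: IHm; apply: leq_trans ltc'c _.
Qed.

Definition stutter (l : seq nat) : seq nat := flatten [seq [:: a; a] | a <- l].

Lemma size_stutter e : size (stutter e) = 2 * size e.
Proof. by elim: e => //= a e ->; rewrite mulnS. Qed.

Lemma take_stutter r e : take (2 * r) (stutter e) = stutter (take r e).
Proof. by elim: e r => [|a e IH] [|r] //; rewrite mulnS add2n /= IH. Qed.

Lemma subseq_stutter e : subseq e (stutter e).
Proof. by elim: e => //= a e IH; rewrite eqxx; exact: subseq_trans IH (subseq_cons _ _). Qed.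

Section Runs.
Variables (T : eqType) (g : T -> nat).

Fixpoint equal_pairs (c : seq T) : seq T :=
  if c is x :: c' then
    if c' is y :: t then if g x == g y then x :: y :: equal_pairs t else equal_pairs c'
    else [::]
  else [::].

Fixpoint run_lasts (c : seq T) : seq T :=
  if c is x :: c' then
    if c' is y :: _ then if g x == g y then run_lasts c' else x :: run_lasts c'
    else [:: x]
  else [::].

Lemma size_run_lasts_cons y t : size (run_lasts t) <= size (run_lasts (y :: t)).
Proof. by case: t => [//|z t] /=; case: ifP. Qed.

Lemma size_le_run_lasts_pairs c : size c <= size (run_lasts c) + size (equal_pairs c).
Proof.
elim/seq_size_ind: c => -[//|x [//|y t]] IH /=; case: ifP => _ /=.
- by have := IH t (ltnW (ltnSn _)); have := size_run_lasts_cons y t; rewrite /=; lia.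
- by have := IH (y :: t) (ltnSn _); rewrite /=; lia.
Qed.

Lemma equal_pairs_subseq c : subseq (equal_pairs c) c.
Proof.
elim/seq_size_ind: c => -[//|x [//|y t]] IH /=; case: ifP => _.
- by rewrite /= !eqxx; exact: IH t (ltnW (ltnSn _)).
- exact: subseq_trans (IH (y :: t) (ltnSn _)) (subseq_cons _ _).
Qed.

Lemma run_lasts_subseq c : subseq (run_lasts c) c.
Proof.
elim/seq_size_ind: c => -[//|x [|y t]] IH /=; first by rewrite eqxx.
have IHy := IH (y :: t) (ltnSn _).
by case: ifP => _; [exact: subseq_trans IHy (subseq_cons _ _) | rewrite /= eqxx].
Qed.

Lemma map_equal_pairs c : exists e, map g (equal_pairs c) = stutter e.
Proof.
elim/seq_size_ind: c => -[|x [|y t]] IH /=; try by exists [::].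
case: ifP => [/eqP gxy|_]; last exact: IH (y :: t) (ltnSn _).
have [e ge] := IH t (ltnW (ltnSn _)).
by exists (g x :: e); rewrite /= ge gxy.
Qed.

Variable pos : T -> nat.
Definition weak_prec : rel T := fun a b => (pos a < pos b) && (g a <= g b).
Definition strict_prec : rel T := fun a b => (pos a < pos b) && (g a < g b).

Lemma weak_prec_trans : transitive weak_prec.
Proof. by move=> b a c /andP[? ?] /andP[? ?]; apply/andP; lia. Qed.

Lemma strict_prec_trans : transitive strict_prec.
Proof. by move=> b a c /andP[? ?] /andP[? ?]; apply/andP; lia. Qed.

Lemma run_lasts_sorted c : sorted weak_prec c -> sorted strict_prec (run_lasts c).
Proof.
elim/seq_size_ind: c => -[//|x [//|y t]] IH /= /andP[/andP[pxy gxy] syt].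
have IHy := IH (y :: t) (ltnSn _) syt.
case: ifP => [_ //|/negbT gx_neq].
rewrite /= path_sortedE ?IHy ?andbT; last exact: strict_prec_trans.
apply/allP => z /(mem_subseq (run_lasts_subseq (y :: t))) zyt.
have y_le : {in y :: t, forall z, (pos y <= pos z) && (g y <= g z)}.
  move=> z'; rewrite inE => /predU1P[-> | zt]; first by rewrite !leqnn.
  move: syt; rewrite /= path_sortedE; last exact: weak_prec_trans.
  by case/andP => /allP /(_ z' zt) /andP[? ?] _; apply/andP; lia.
by have /andP[? ?] := y_le z zyt; apply/andP; move: gx_neq; lia.
Qed.

End Runs.

Lemma sorted_total (T : eqType) (e : rel T) s x y : transitive e -> sorted e s ->
  x \in s -> y \in s -> x != y -> e x y || e y x.
Proof.
move=> e_tr; rewrite sorted_pairwise //; elim: s => //= a s IH /andP[/allP ea es].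
rewrite !inE => /predU1P[->|xs] /predU1P[->|ys]; rewrite ?eqxx // => neq_xy.
- by rewrite ea.
- by rewrite ea ?orbT.
- exact: IH.
Qed.

Lemma sorted_val_enum N (I : {set 'I_N}) : sorted ltn (map val (enum I)).
Proof.
rewrite -[enum _](eq_filter (mem_enum _)) -(eq_filter (mem_map val_inj _)) -filter_map.
by rewrite (sorted_filter ltn_trans) // unlock val_ord_enum iota_ltn_sorted.
Qed.

Definition letter k n (s : mword k n) (i : 'I_(k * n)) : nat := s i.

(* [b] ranges over ['I_n.+1] rather than ['I_n] so that [card_sorted_tuples]
   counts the candidate value sequences. *)
Definition has_pattern k n r (s : mword k n) : bool :=
  [exists t : (2 * r).-tuple 'I_(k * n), exists b : r.-tuple 'I_n.+1,
    [&& sorted ltn (map val t), sorted leq (map val b)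
      & map (letter s) t == stutter (map val b)]].

Section Chains.
Variables (k n : nat) (s : mword k n).
Local Notation N := (k * n).
Local Notation wprec := (weak_prec (letter s) (@nat_of_ord N)).
Local Notation sprec := (strict_prec (letter s) (@nat_of_ord N)).

Lemma Lstrict_le_Lweak : Lstrict s <= Lweak s.
Proof.
apply/bigmax_leqP => I /forallP sI; apply: leq_bigmax_cond.
apply/forallP => i; apply/implyP => iI; apply/forallP => j; apply/implyP => jI.
by apply/implyP => ltij; move/forallP: (implyP (sI i) iI) => /(_ j) /implyP/(_ jI)/implyP/(_ ltij)/ltnW.
Qed.

Lemma Lweak_le : Lweak s <= N.
Proof. by apply/bigmax_leqP => I _; apply: leq_trans (max_card _) _; rewrite card_ord. Qed.

Lemma exists_weak_chain_seq : exists2 c, sorted wprec c & size c = Lweak s.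
Proof.
have chain0 : weak_chain s set0 by apply/forallP => i; rewrite inE.
rewrite /Lweak (bigop.bigmax_eq_arg set0) //; case: arg_maxnP => // I /forallP wI _.
exists (enum I); last by rewrite cardE.
have := sorted_val_enum I; rewrite sorted_map; apply: (sub_in_sorted (P := mem I)).
  move=> a b aI bI /= ltab.
  by rewrite /weak_prec ltab; move/forallP: (implyP (wI a) aI) => /(_ b) /implyP/(_ bI)/implyP/(_ ltab).
by apply/allP => a; rewrite mem_enum.
Qed.

Lemma strict_chain_size_le c : sorted sprec c -> size c <= Lstrict s.
Proof.
move=> sc; have uc : uniq c.
  by apply: sorted_uniq sc; [exact: strict_prec_trans | move=> x; rewrite /strict_prec ltnn].
rewrite -(card_uniqP uc) -cardsE; apply: leq_bigmax_cond.
apply/forallP => i; apply/implyP; rewrite inE => ic; apply/forallP => j; apply/implyP.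
rewrite inE => jc; apply/implyP => ltij.
have neq_ij : i != j by apply: contraTneq ltij => ->; rewrite ltnn.
case/orP: (sorted_total (@strict_prec_trans _ _ _) sc ic jc neq_ij) => /andP[] //.
by rewrite ltnNge (ltnW ltij).
Qed.

Lemma has_pattern_of_pairs r p e : sorted wprec p -> map (letter s) p = stutter e ->
  2 * r <= size p -> has_pattern r s.
Proof.
move=> sp pe le2r; have size_p : size p = 2 * size e by rewrite -(size_map (letter s)) pe size_stutter.
have t_size : size (take (2 * r) p) == 2 * r by rewrite size_takel.
have e_lt : all (fun a => a < n.+1) (take r e).
  apply/allP => a /mem_take ae; have : a \in map (letter s) p by rewrite pe (mem_subseq (subseq_stutter e)).
  by case/mapP => i _ ->; exact: leqW (ltn_ord _).
have b_size : size (map inord (take r e) : seq 'I_n.+1) == r by rewrite size_map size_takel //; lia.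
have val_b : map val (map inord (take r e) : seq 'I_n.+1) = take r e.
  by rewrite -map_comp; apply: map_id_in => a ae /=; rewrite inordK //; move/allP: e_lt; apply.
apply/existsP; exists (Tuple t_size); apply/existsP; exists (Tuple b_size).
rewrite /= val_b -take_stutter -pe -map_take eqxx andbT; apply/andP; split.
- rewrite sorted_map; apply: sub_sorted (subseq_sorted (@weak_prec_trans _ _ _) (take_subseq _ _) sp).
  by move=> a b /andP[].
- have : sorted leq (map (letter s) p) by rewrite sorted_map; apply: sub_sorted sp => a b /andP[].
  rewrite pe => /(subseq_sorted leq_trans (subseq_stutter e)).
  exact: (subseq_sorted leq_trans (take_subseq _ _)).
Qed.

Lemma has_pattern_of_gap r : Lstrict s + 2 * r <= Lweak s -> has_pattern r s.
Proof.
have [c sc <-] := exists_weak_chain_seq => gap.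
have lasts_le := strict_chain_size_le (run_lasts_sorted sc).
have [e pe] := map_equal_pairs (letter s) c.
apply: (has_pattern_of_pairs _ pe).
  exact: (subseq_sorted (@weak_prec_trans _ _ _) (equal_pairs_subseq _ _) sc).
by have := size_le_run_lasts_pairs (letter s) c; lia.
Qed.

End Chains.

(** * Counting the multiset permutations that carry a pattern *)

Lemma exists_perm_map_uniq (T : finType) (t1 t2 : seq T) :
  uniq t1 -> uniq t2 -> size t1 = size t2 -> exists p : {perm T}, map p t1 = t2.
Proof.
move=> u1 u2 s12; case: t1 u1 s12 => [|x0 t1'] u1 s12.
  by case: t2 s12 {u2} => // _; exists 1%g.
set t1 := x0 :: t1' in u1 s12 *.
pose c (t : seq T) := t ++ [seq x <- enum T | x \notin t].
have c_uniq t : uniq t -> uniq (c t).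
  move=> ut; rewrite cat_uniq ut filter_uniq ?enum_uniq // andbT.
  by apply/hasPn => x; rewrite mem_filter => /andP[].
have c_mem t x : x \in c t by rewrite mem_cat mem_filter mem_enum andbT orbN.
have c_size t : uniq t -> size (c t) = #|T|.
  move=> ut; rewrite -(card_uniqP (c_uniq t ut)) cardT -cardE.
  by apply: eq_card => x; rewrite c_mem.
pose f x := nth x (c t2) (index x (c t1)).
have f_inj : injective f.
  move=> x y; rewrite /f.
  have ix : index x (c t1) < size (c t2) by rewrite c_size // -(c_size t1) // index_mem.
  have iy : index y (c t1) < size (c t2) by rewrite c_size // -(c_size t1) // index_mem.
  rewrite (set_nth_default x y iy) => /eqP; rewrite (nth_uniq _ ix iy (c_uniq _ u2)) => /eqP ixy.
  by rewrite -(nth_index x (c_mem t1 x)) ixy nth_index.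
exists (perm f_inj); apply: (@eq_from_nth _ x0); first by rewrite size_map.
move=> i; rewrite size_map => it1; rewrite (nth_map x0) // permE /f.
have -> : index (nth x0 t1 i) (c t1) = i by rewrite index_cat mem_nth // index_uniq.
by rewrite nth_cat -s12 it1; apply: set_nth_default; rewrite -s12.
Qed.

Lemma sum_nat_bool_card (T : finType) (Q P : pred T) :
  \sum_(x | Q x) (P x : nat) = #|[set x | Q x && P x]|.
Proof. by rewrite -sum1dep_card big_mkcondr; apply: eq_bigr => x _; case: (P x). Qed.

Section PatternCount.
Variables k n : nat.
Local Notation N := (k * n).

Definition mperm_match (t : seq 'I_N) (l : seq nat) :=
  [set s in MPerm k n | map (letter s) t == l].

(* Relabelling positions by a permutation preserves [MPerm]. *)
Lemma card_mperm_match_uniq t1 t2 l : uniq t1 -> uniq t2 -> size t1 = size t2 ->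
  #|mperm_match t1 l| <= #|mperm_match t2 l|.
Proof.
move=> u1 u2 s12; have [p pt12] := exists_perm_map_uniq u1 u2 s12.
pose F (s : mword k n) : mword k n := [ffun i => s ((p^-1)%g i)].
have F_inj : injective F.
  by move=> s1 s2 /ffunP F12; apply/ffunP => j; have := F12 (p j); rewrite !ffunE permK.
rewrite -(card_imset _ F_inj); apply: subset_leq_card; apply/subsetP => _ /imsetP[s + ->].
rewrite !inE => /andP[/forallP sM /eqP <-]; apply/andP; split.
- apply/forallP => a; have <- : (p^-1)%g @^-1: [set j | s j == a] = [set i | F s i == a].
    by apply/setP => i; rewrite !inE ffunE.
  by rewrite card_preimset //; exact: perm_inj.
- by rewrite -pt12 -map_comp; apply/eqP/eq_map => x; rewrite /letter /= ffunE permK.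
Qed.

Lemma card_letter_le s a : s \in MPerm k n -> #|[set i | letter s i == a]| <= k.
Proof.
rewrite inE => /forallP sM; have [lt_an | le_na] := ltnP a n.
  by rewrite -[X in _ <= X](eqP (sM (Ordinal lt_an))); apply/eq_leq/eq_card => i; rewrite !inE.
rewrite (_ : [set i | _] = set0) ?cards0 //; apply/setP => i; rewrite !inE.
by apply/negbTE; rewrite neq_ltn (leq_trans (ltn_ord _) le_na).
Qed.

Lemma card_tuple_match_le s m l : s \in MPerm k n ->
  #|[set t : m.-tuple 'I_N | map (letter s) t == l]| <= k ^ m.
Proof.
move=> sM; elim: m l => [|m IH] l; first by rewrite (leq_trans (max_card _)) // card_tuple.
pose cons_t (x : 'I_N * m.-tuple 'I_N) := [tuple of x.1 :: x.2].
pose A := [set i | letter s i == head 0 l].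
pose B := [set t : m.-tuple 'I_N | map (letter s) t == behead l].
apply: (@leq_trans #|cons_t @: setX A B|).
  apply/subset_leq_card/subsetP => t; rewrite inE => /eqP tl.
  apply/imsetP; exists (thead t, [tuple of behead t]).
    by rewrite !inE -tl; case/tupleP: t {tl} => x t /=; rewrite !eqxx.
  by apply: val_inj; case/tupleP: t {tl}.
rewrite (leq_trans (leq_imset_card _ _)) // cardsX expnS.
exact: leq_mul (card_letter_le _ sM) (IH _).
Qed.

Lemma sum_mperm_match_le m l :
  \sum_(u : m.-tuple 'I_N | uniq u) #|mperm_match u l| <= #|MPerm k n| * k ^ m.
Proof.
under eq_bigr do rewrite -sum_nat_bool_card /=.
rewrite exchange_big /= -sum_nat_const; apply: leq_sum => s sM.
rewrite sum_nat_bool_card (leq_trans _ (card_tuple_match_le m l sM)) //.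
by apply/subset_leq_card/subsetP => u; rewrite !inE => /andP[].
Qed.

(* Averaging over the [N ^_ m] relabellings of the positions. *)
Lemma card_mperm_match_le m (t : m.-tuple 'I_N) l : uniq t ->
  #|mperm_match t l| * N ^_ m <= #|MPerm k n| * k ^ m.
Proof.
move=> ut; apply: leq_trans (sum_mperm_match_le m l).
have -> : N ^_ m = #|[set u : m.-tuple 'I_N | uniq u]|.
  rewrite -[N in LHS]card_ord -(card_uniq_tuples m (predT : pred 'I_N)).
  by apply: eq_card => u; rewrite !inE all_predT.
rewrite -(sum1dep_card (fun u : m.-tuple 'I_N => uniq u)) big_distrr /= muln1.
apply: leq_sum => u uu.
by apply: card_mperm_match_uniq => //; rewrite !size_tuple.
Qed.

Lemma card_has_pattern_le_sum r :
  #|[set s in MPerm k n | has_pattern r s]| <=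
  \sum_(t : (2 * r).-tuple 'I_N | sorted ltn (map val t))
    \sum_(b : r.-tuple 'I_n.+1 | sorted leq (map val b)) #|mperm_match t (stutter (map val b))|.
Proof.
under eq_bigr do under eq_bigr do rewrite -sum_nat_bool_card /=.
under eq_bigr do rewrite exchange_big /=.
rewrite exchange_big /= -sum_nat_bool_card; apply: leq_sum => s _.
case: (boolP (has_pattern r s)) => //= /existsP[t /existsP[b /and3P[st sb tb]]].
by rewrite (bigD1 t) //= (bigD1 b) //= tb -addnA leq_addr.
Qed.

Lemma card_has_pattern_fact r :
  #|[set s in MPerm k n | has_pattern r s]| * (2 * r)`! <=
  'C(r + n, r) * k ^ (2 * r) * #|MPerm k n|.
Proof.
have [C0 | C_gt0] := posnP 'C(N, 2 * r).
  rewrite (leq_trans (leq_mul (card_has_pattern_le_sum r) (leqnn _))) // big_pred0 //.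
  move=> t; apply/negP => st; have : t \in [set t : (2 * r).-tuple 'I_N | sorted ltn (map val t)].
    by rewrite inE.
  by move: (card_ltn_sorted_tuples (2 * r) N); rewrite C0 => /eqP; rewrite cards_eq0 => /eqP ->; rewrite inE.
rewrite -(leq_pmul2l C_gt0) mulnCA bin_ffact.
apply: leq_trans (leq_mul (card_has_pattern_le_sum r) (leqnn _)) _.
rewrite big_distrl /=; apply: (@leq_trans (\sum_(t : (2 * r).-tuple 'I_N | sorted ltn (map val t))
   \sum_(b : r.-tuple 'I_n.+1 | sorted leq (map val b)) (#|MPerm k n| * k ^ (2 * r)))).
  apply: leq_sum => t st; rewrite big_distrl /=; apply: leq_sum => b _.
  apply: card_mperm_match_le; rewrite -(map_inj_uniq val_inj).
  exact: (sorted_uniq ltn_trans ltnn st).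
rewrite !sum_nat_cond_const card_ltn_sorted_tuples card_sorted_tuples.
by apply: eq_leq; ring.
Qed.

End PatternCount.

Lemma ffact_leq_expn m i : m ^_ i <= m ^ i.
Proof. by rewrite ffact_prod -[in X in _ <= X](card_ord i) -prod_nat_const leq_prod // => j _; apply: leq_subr. Qed.

Lemma bin_leq_exp2 m i : 'C(m, i) <= 2 ^ m.
Proof.
have [lt_mi | le_im] := ltnP m i; first by rewrite bin_small.
by rewrite -[2]/(1 + 1) expnDn (bigD1 (Ordinal (le_im : i < m.+1))) //= !exp1n !muln1 leq_addr.
Qed.

(* [r ^ r] is at most [(2r) ^_ r = 'C(2r, r) * r`!]. *)
Lemma expn_self_leq_fact r : r ^ r <= 4 ^ r * r`!.
Proof.
have ffact_ge : r ^ r <= (2 * r) ^_ r.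
  rewrite ffact_prod -[in X in X <= _](card_ord r) -prod_nat_const leq_prod // => j _.
  by rewrite card_ord; have := ltn_ord j; lia.
by rewrite (leq_trans ffact_ge) // -bin_ffact leq_mul2r -[4]/(2 ^ 2) -expnM bin_leq_exp2 orbT.
Qed.

Lemma expn_cube_leq_fact r : (r ^ 3) ^ r <= 16 ^ r * (r`! * (2 * r)`!).
Proof.
have sq_le : (r ^ r) ^ 2 <= 4 ^ r * (2 * r)`!.
  have e1 : (2 * r) ^ (2 * r) = 4 ^ r * (r ^ r) ^ 2.
    by rewrite expnMn [in r ^ _]mulnC !expnM.
  have e2 : 4 ^ (2 * r) = 4 ^ r * 4 ^ r by rewrite mul2n -addnn expnD.
  by have := expn_self_leq_fact (2 * r); rewrite e1 e2 -mulnA leq_pmul2l ?expn_gt0.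
have e3 : (r ^ 3) ^ r = r ^ r * (r ^ r) ^ 2.
  by rewrite -!expnM -expnD mulnC; congr (_ ^ _); lia.
have e4 : 16 ^ r = 4 ^ r * 4 ^ r by rewrite -expnMn.
by rewrite e3 e4 mulnACA leq_mul ?expn_self_leq_fact.
Qed.

Lemma card_has_pattern_le k n r : 0 < r -> r <= n ->
  #|[set s in MPerm k n | has_pattern r s]| * (r ^ 3) ^ r <= (32 * n * k ^ 2) ^ r * #|MPerm k n|.
Proof.
move=> r_gt0 le_rn; set H := #|_|; set M := #|MPerm k n|.
have binom : 'C(r + n, r) * r`! <= (2 * n) ^ r.
  by rewrite bin_ffact (leq_trans (ffact_leq_expn _ _)) // leq_exp2r //; lia.
have e : (32 * n * k ^ 2) ^ r = 16 ^ r * (2 * n) ^ r * (k ^ 2) ^ r.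
  by rewrite -!expnMn mulnA.
apply: leq_trans (leq_mul (leqnn H) (expn_cube_leq_fact r)) _.
rewrite (_ : H * _ = 16 ^ r * r`! * (H * (2 * r)`!)); last by ring.
apply: leq_trans (leq_mul (leqnn _) (card_has_pattern_fact k n r)) _.
rewrite e expnM (_ : _ * _ = 16 ^ r * ('C(r + n, r) * r`!) * (k ^ 2) ^ r * M); last by ring.
by rewrite !leq_mul.
Qed.

Local Open Scope ring_scope.

Lemma ler_of_sqr (R : realFieldType) (x y : R) : 0 <= y -> x ^+ 2 <= y ^+ 2 -> x <= y.
Proof.
move=> y_ge0 le_sq; have [x_ge0 | x_lt0] := lerP 0 x; last exact: le_trans (ltW x_lt0) y_ge0.
by rewrite -ler_sqr.
Qed.

Section GapProbability.
Variables (R : realType) (k n : nat).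
Local Notation N := (k * n).

Definition pattern_ratio r : R := (32 * n * k ^ 2)%N%:R / (r ^ 3)%N%:R.

Lemma Prob_has_pattern_le r : (0 < r)%N -> (r <= n)%N ->
  Prob R (@has_pattern k n r) <= pattern_ratio r ^+ r.
Proof.
move=> r_gt0 le_rn; rewrite /Prob /pattern_ratio expr_div_n.
have [-> | M_gt0] := posnP #|MPerm k n|; first by rewrite invr0 mulr0 divr_ge0 ?exprn_ge0.
rewrite ler_pdivrMr ?ltr0n // mulrAC ler_pdivlMr ?exprn_gt0 ?ltr0n ?expn_gt0 ?r_gt0 //.
by rewrite -!natrX -!natrM ler_nat card_has_pattern_le.
Qed.

Lemma Prob_le (E F : pred (mword k n)) :
  (forall s, s \in MPerm k n -> E s -> F s) -> Prob R E <= Prob R F.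
Proof.
move=> EF; rewrite /Prob ler_wpM2r ?invr_ge0 ?ler0n // ler_nat.
apply/subset_leq_card/subsetP => s; rewrite !inE => /andP[sM Es].
by rewrite sM (EF s) ?inE.
Qed.

Lemma Prob_gap_le_pattern (d : R) r : 2 * r%:R <= d ->
  Prob R (fun s : mword k n => d <= (Lweak s)%:R - (Lstrict s)%:R) <= Prob R (@has_pattern k n r).
Proof.
move=> le_rd; apply: Prob_le => s _ gap; apply: has_pattern_of_gap.
by rewrite -(ler_nat R) natrD natrM; move: (Lstrict_le_Lweak s); rewrite -(ler_nat R); lra.
Qed.

Lemma gap_le_pattern (s : mword k n) r : (Lweak s - Lstrict s <= 2 * r + N * has_pattern r s)%N.
Proof.
case: (boolP (has_pattern r s)) => [_ | no_pat]; first by have := Lweak_le s; lia.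
by rewrite muln0 addn0 leqNgt; apply: contra no_pat => ?; apply: has_pattern_of_gap; lia.
Qed.

Lemma Exp_gap_ge0 : 0 <= Exp R (@Lweak k n) - Exp R (@Lstrict k n).
Proof.
rewrite /Exp -mulrBl -sumrB mulr_ge0 ?invr_ge0 ?ler0n //.
by apply: sumr_ge0 => s _; rewrite subr_ge0 ler_nat Lstrict_le_Lweak.
Qed.

Lemma Exp_gap_le_pattern r :
  Exp R (@Lweak k n) - Exp R (@Lstrict k n) <= 2 * r%:R + N%:R * Prob R (@has_pattern k n r).
Proof.
rewrite /Exp /Prob -mulrBl -sumrB; set M := #|MPerm k n|; set H := #|_|.
have sum_le : (\sum_(s in MPerm k n) (Lweak s - Lstrict s) <= 2 * r * M + N * H)%N.
  apply: (@leq_trans (\sum_(s in MPerm k n) (2 * r + N * has_pattern r s))).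
    by apply: leq_sum => s _; exact: gap_le_pattern.
  by rewrite big_split /= sum_nat_const -big_distrr /= sum_nat_bool_card mulnC leq_add.
have -> : \sum_(s in MPerm k n) ((Lweak s)%:R - (Lstrict s)%:R) =
          (\sum_(s in MPerm k n) (Lweak s - Lstrict s)%N)%:R :> R.
  by rewrite natr_sum; apply: eq_bigr => s _; rewrite natrB // Lstrict_le_Lweak.
apply: le_trans (ler_wpM2r _ (_ : _ <= (2 * r * M + N * H)%N%:R)) _; rewrite ?invr_ge0 ?ler0n ?ler_nat //.
rewrite natrD !natrM mulrDl -!mulrA lerD //.
have [-> | M_gt0] := posnP M; first by rewrite invr0 !mulr0 mulr_ge0 ?ler0n.
by rewrite mulfV ?mulr1 // pnatr_eq0 -lt0n.
Qed.

End GapProbability.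

(** * Choice of the pattern length *)

Lemma exists_nat_quarter_half (R : realType) (x : R) m : 12 <= x -> x <= 2 * m%:R ->
  exists r, [/\ (3 <= r <= m)%N, 2 * r%:R <= x & x <= 4 * r%:R].
Proof.
move=> x_ge12 x_le; set r := Num.truncn (x / 2).
have /andP[r_le r_gt] : r%:R <= x / 2 < r.+1%:R by apply: truncn_itv; lra.
have r_ge3 : (3 <= r)%N by rewrite truncn_ge_nat; lra.
have r3 : 3 <= r%:R :> R by rewrite ler_nat.
have {}r_gt : x / 2 < r%:R + 1 by rewrite natr1.
clearbody r.
by exists r; rewrite r_ge3 /= -(ler_nat R); split; lra.
Qed.

Lemma pattern_ratio_small (R : realType) k n r (a e x : R) :
  0 <= a <= 1 -> 0 <= e <= 1 -> 0 < x -> (3 <= r)%N -> (0 < k)%N ->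
  x ^+ 2 = a ^+ 2 * n%:R * k%:R -> x <= 4 * r%:R ->
  2048 ^+ 3 * k%:R ^+ 2 <= e ^+ 2 * a ^+ 10 * n%:R ->
  pattern_ratio R k n r ^+ r <= e /\ (k * n)%:R * pattern_ratio R k n r ^+ r <= e * x.
Proof.
move=> /andP[a_ge0 a_le1] /andP[e_ge0 e_le1] x_gt0 r_ge3 k_gt0 x_sq x_le large_n.
set rho := pattern_ratio R k n r; set nn : R := n%:R in x_sq large_n *.
set kr : R := k%:R in x_sq large_n *; set rr : R := r%:R in x_le.
have kr_ge1 : 1 <= kr by rewrite ler1n.
have kr_ge0 : 0 <= kr := le_trans ler01 kr_ge1.
have nn_ge0 : 0 <= nn by rewrite ler0n.
have rr_gt0 : 0 < rr by rewrite ltr0n; apply: leq_trans r_ge3.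
have rho_ge0 : 0 <= rho by rewrite divr_ge0 ?ler0n.
have rho_rr : rho * rr ^+ 3 = 32 * nn * kr ^+ 2.
  by rewrite /rho /pattern_ratio (natrX _ r 3) mulfVK ?expf_neq0 ?lt0r_neq0 // natrM (natrX _ k 2) natrM.
have kn : (k * n)%:R = kr * nn by rewrite natrM.
clearbody rho nn kr rr.
have large_x : 2048 ^+ 3 * kr ^+ 3 <= e ^+ 2 * a ^+ 8 * x ^+ 2.
  have -> : e ^+ 2 * a ^+ 8 * x ^+ 2 = e ^+ 2 * a ^+ 10 * nn * kr by rewrite x_sq; ring.
  by rewrite [kr ^+ 3]exprSr mulrA ler_wpM2r //.
have rho_x3 : rho * x ^+ 3 <= 2048 * nn * kr ^+ 2.
  have : x ^+ 3 <= (4 * rr) ^+ 3.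
    by apply: lerXn2r x_le; rewrite nnegrE ltW // mulr_gt0.
  by move=> /(ler_wpM2l rho_ge0); rewrite exprMn; lra.
have x3_gt0 : 0 < x ^+ 3 by rewrite exprn_gt0.
have rho_le_e : rho <= e.
  have k_le : 2048 * kr <= e * a ^+ 2 * x.
    apply: ler_of_sqr; first by rewrite !mulr_ge0 ?exprn_ge0 // ltW.
    have : e ^+ 2 * a ^+ 8 * x ^+ 2 <= e ^+ 2 * a ^+ 4 * x ^+ 2.
      apply: ler_wpM2r; first by rewrite exprn_ge0 // ltW.
      by apply: ler_wpM2l; [exact: exprn_ge0 | exact: (ler_wiXn2l a_ge0 a_le1 (isT : (4 <= 8)%N))].
    have : kr ^+ 2 <= kr ^+ 3 by exact: (ler_weXn2l kr_ge1 (isT : (2 <= 3)%N)).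
    have : 1 <= kr ^+ 3 by rewrite exprn_ege1.
    have -> : (e * a ^+ 2 * x) ^+ 2 = e ^+ 2 * a ^+ 4 * x ^+ 2 by ring.
    have -> : (2048 * kr) ^+ 2 = 2048 ^+ 2 * kr ^+ 2 by ring.
    lra.
  rewrite -(ler_pM2r x3_gt0) (le_trans rho_x3) //.
  have -> : e * x ^+ 3 = (e * a ^+ 2 * x) * (nn * kr) by rewrite exprSr x_sq; ring.
  have -> : 2048 * nn * kr ^+ 2 = (2048 * kr) * (nn * kr) by ring.
  by rewrite ler_wpM2r // mulr_ge0 //.
have rho_le1 := le_trans rho_le_e e_le1.
have rho_pow : rho ^+ r <= rho ^+ 3 := ler_wiXn2l rho_ge0 rho_le1 r_ge3.
split; first by rewrite (le_trans rho_pow) // (le_trans _ rho_le_e) // -[X in _ <= X]expr1 ler_wiXn2l.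
rewrite kn (le_trans (ler_wpM2l _ rho_pow)) ?mulr_ge0 //.
rewrite -(ler_pM2r (exprn_gt0 9 x_gt0)).
have -> : kr * nn * rho ^+ 3 * x ^+ 9 = kr * nn * (rho * x ^+ 3) ^+ 3 by ring.
have -> : e * x * x ^+ 9 = e * (x ^+ 2) ^+ 5 by ring.
apply: (@le_trans _ _ (kr * nn * (2048 * nn * kr ^+ 2) ^+ 3)).
  rewrite ler_wpM2l ?mulr_ge0 //.
  by apply: lerXn2r rho_x3; rewrite nnegrE !mulr_ge0 ?exprn_ge0 // ltW.
have large_n' : 2048 ^+ 3 * kr ^+ 2 <= e * a ^+ 10 * nn.
  apply: le_trans large_n _; rewrite ler_wpM2r // ler_wpM2r ?exprn_ge0 //.
  by rewrite expr2 ler_piMl.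
rewrite x_sq.
have -> : kr * nn * (2048 * nn * kr ^+ 2) ^+ 3 = nn ^+ 4 * kr ^+ 5 * (2048 ^+ 3 * kr ^+ 2) by ring.
have -> : e * (a ^+ 2 * nn * kr) ^+ 5 = nn ^+ 4 * kr ^+ 5 * (e * a ^+ 10 * nn) by ring.
by rewrite ler_wpM2l // mulr_ge0 ?exprn_ge0 //.
Qed.

Lemma exists_pattern_length (R : realType) k n (a e : R) :
  0 < a <= 1 -> 0 < e <= 1 -> (0 < k)%N ->
  2048 ^+ 3 * k%:R ^+ 2 <= e ^+ 2 * a ^+ 10 * n%:R ->
  exists r, [/\ (0 < r <= n)%N, 2 * r%:R <= a * Num.sqrt (n * k)%:R,
    pattern_ratio R k n r ^+ r <= e &
    (k * n)%:R * pattern_ratio R k n r ^+ r <= e * (a * Num.sqrt (n * k)%:R)].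
Proof.
move=> /andP[a_gt0 a_le1] /andP[e_gt0 e_le1] k_gt0 large_n.
have [a_ge0 e_ge0] := (ltW a_gt0, ltW e_gt0).
set x := a * _.
have x_sq : x ^+ 2 = a ^+ 2 * n%:R * k%:R.
  by rewrite /x exprMn sqr_sqrtr ?ler0n // natrM mulrA.
have kr_ge1 : 1 <= k%:R :> R by rewrite ler1n.
have nn_ge0 : 0 <= n%:R :> R by rewrite ler0n.
have n_large : 2048 ^+ 3 * k%:R ^+ 2 <= a ^+ 2 * n%:R :> R.
  apply: le_trans large_n _; rewrite ler_wpM2r //.
  have -> : e ^+ 2 * a ^+ 10 = e ^+ 2 * a ^+ 8 * a ^+ 2 by ring.
  by rewrite ler_piMl ?exprn_ge0 // mulr_ile1 ?exprn_ge0 ?exprn_ile1.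
have x_ge0 : 0 <= x by rewrite mulr_ge0 ?sqrtr_ge0.
have x_ge12 : 12 <= x.
  apply: ler_of_sqr => //; rewrite x_sq.
  have : 1 <= k%:R ^+ 2 :> R by rewrite exprn_ege1.
  have : a ^+ 2 * n%:R <= a ^+ 2 * n%:R * k%:R :> R by rewrite ler_peMr ?mulr_ge0 ?exprn_ge0.
  lra.
have x_le_n : x <= 2 * n%:R.
  apply: ler_of_sqr; first by rewrite mulr_ge0.
  have : k%:R <= k%:R ^+ 2 :> R by rewrite expr2 ler_peMl // (le_trans ler01).
  have : a ^+ 2 <= 1 by rewrite exprn_ile1.
  have : a ^+ 2 * n%:R <= n%:R :> R by rewrite ler_piMl ?exprn_ile1.
  rewrite x_sq; nra.
have [r [/andP[r_ge3 r_le_n] r_le x_le]] := exists_nat_quarter_half x_ge12 x_le_n.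
have [x_gt0 a01 e01] : [/\ 0 < x, 0 <= a <= 1 & 0 <= e <= 1] by split; [lra | apply/andP | apply/andP].
have [rho_le_e rho_kn] := pattern_ratio_small a01 e01 x_gt0 r_ge3 k_gt0 x_sq x_le large_n.
by exists r; split => //; rewrite (leq_trans _ r_ge3).
Qed.

Section Asymptotics.
Variables (R : realType) (kk : nat -> nat).
Hypothesis kpos : forall n, (0 < kk n)%N.
Hypothesis hk : forall eps : R, 0 < eps -> exists N : nat, forall n : nat, (N <= n)%N ->
  ((kk n ^ 2 * (kk n)`!)%N)%:R <= eps * Num.sqrt (n%:R).

Lemma eventually_sqr_le (c : R) : 0 < c ->
  exists N, forall n, (N <= n)%N -> (kk n)%:R ^+ 2 <= c * n%:R.
Proof.
move=> c_gt0; have [eta [eta_gt0 eta_le_c eta_le1]] : exists eta : R, [/\ 0 < eta, eta <= c & eta <= 1].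
  by exists (Num.min c 1); rewrite lt_min c_gt0 ltr01 !ge_min !lexx orbT.
have [N HN] := hk eta_gt0; exists N => n le_Nn.
have y_ge1 : 1 <= (kk n)%:R ^+ 2 :> R by rewrite exprn_ege1 // ler1n.
have y_le : (kk n)%:R ^+ 2 <= eta * Num.sqrt n%:R.
  by apply: le_trans (HN n le_Nn); rewrite -natrX ler_nat leq_pmulr ?fact_gt0.
move: ((kk n)%:R ^+ 2) y_ge1 y_le => y y_ge1 y_le.
have : y ^+ 2 <= (eta * Num.sqrt n%:R) ^+ 2.
  by apply: lerXn2r y_le; rewrite nnegrE ?(le_trans ler01 y_ge1) // mulr_ge0 ?sqrtr_ge0 ?ltW.
rewrite exprMn sqr_sqrtr ?ler0n //.
have : eta ^+ 2 * n%:R <= c * n%:R.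
  apply: ler_wpM2r; first exact: ler0n.
  by apply: le_trans eta_le_c; rewrite expr2 ler_piMl // ltW.
have : y <= y ^+ 2 by rewrite expr2 ler_peMl // (le_trans ler01).
lra.
Qed.

Lemma eventually_pattern_length (a e : R) : 0 < a <= 1 -> 0 < e <= 1 ->
  exists N, forall n, (N <= n)%N -> exists r, [/\ (0 < r <= n)%N,
    2 * r%:R <= a * Num.sqrt (n * kk n)%:R, pattern_ratio R (kk n) n r ^+ r <= e &
    (kk n * n)%:R * pattern_ratio R (kk n) n r ^+ r <= e * (a * Num.sqrt (n * kk n)%:R)].
Proof.
move=> /andP[a_gt0 a_le1] /andP[e_gt0 e_le1].
have c_gt0 : 0 < e ^+ 2 * a ^+ 10 / 2048 ^+ 3 by rewrite !mulr_gt0 ?invr_gt0 ?exprn_gt0.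
have [N HN] := eventually_sqr_le c_gt0; exists N => n le_Nn.
apply: exists_pattern_length; rewrite ?a_gt0 ?e_gt0 //.
apply: le_trans (ler_wpM2l _ (HN n le_Nn)) _; first by rewrite exprn_ge0.
by rewrite mulrA (mulrCA (2048 ^+ 3)) mulfV ?mulr1 // expf_neq0 // pnatr_eq0.
Qed.

End Asymptotics.

Lemma exists_pos_le1 (R : realType) (x : R) : 0 < x -> exists2 y : R, 0 < y <= 1 & y <= x.
Proof. by move=> x_gt0; exists (Num.min x 1); rewrite ?lt_min ?x_gt0 ?ltr01 ge_min lexx ?orbT. Qed.

Theorem mainTheorem3 (R : realType) (kk : nat -> nat)
  (kpos : forall n, (0 < kk n)%N)
  (hk : forall eps : R, 0 < eps -> exists N : nat, forall n : nat, (N <= n)%N ->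
          ((kk n ^ 2 * (kk n)`!)%N)%:R <= eps * Num.sqrt (n%:R)) :
  (forall eps : R, 0 < eps -> exists N : nat, forall n : nat, (N <= n)%N ->
     `| Exp R (@Lweak (kk n) n) - Exp R (@Lstrict (kk n) n) |
       <= eps * Num.sqrt ((n * kk n)%:R))
  /\
  (forall delta : R, 0 < delta -> forall eps : R, 0 < eps ->
     exists N : nat, forall n : nat, (N <= n)%N ->
       Prob R (fun s : mword (kk n) n =>
         delta * Num.sqrt ((n * kk n)%:R) <= (Lweak s)%:R - (Lstrict s)%:R) <= eps).
Proof.
split=> [eps eps_gt0 | delta delta_gt0 eps eps_gt0];
  have [e e01 e_le] := exists_pos_le1 eps_gt0; have /andP[e_gt0 e_le1] := e01.
- have half_e : 0 < e / 2 <= 1 by apply/andP; split; lra.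
  have [N HN] := eventually_pattern_length kpos hk half_e e01.
  exists N => n /HN [r [/andP[r_gt0 r_le_n] r_le _ kn_le]].
  have := sqrtr_ge0 ((n * kk n)%:R : R).
  move: (Num.sqrt _) r_le kn_le => S r_le kn_le S_ge0.
  rewrite ger0_norm ?Exp_gap_ge0 // (le_trans (Exp_gap_le_pattern _ _ _ r)) //.
  have : (kk n * n)%:R * Prob R (@has_pattern (kk n) n r) <= e * (e / 2 * S).
    by apply: le_trans kn_le; rewrite ler_wpM2l ?ler0n ?Prob_has_pattern_le.
  have e2_ge0 : 0 <= e / 2 by lra.
  have : e * (e / 2 * S) <= e / 2 * S by rewrite ler_piMl // mulr_ge0.
  have : e * S <= eps * S by rewrite ler_wpM2r.
  lra.
- have [a a01 a_le] := exists_pos_le1 delta_gt0.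
  have [N HN] := eventually_pattern_length kpos hk a01 e01.
  exists N => n /HN [r [/andP[r_gt0 r_le_n] r_le rho_le _]].
  have gap_le : 2 * r%:R <= delta * Num.sqrt (n * kk n)%:R.
    by apply: le_trans r_le _; rewrite ler_wpM2r ?sqrtr_ge0.
  apply: le_trans (Prob_gap_le_pattern _ _ gap_le) _.
  exact: le_trans (Prob_has_pattern_le _ _ r_gt0 r_le_n) (le_trans rho_le e_le).
Qed.
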